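(* Let $n\ge2$, $k\ge2$. Denote by $\partial_k$ the graph distance in $H_{n,k}$ and by $\partial_{k-1}$ the graph distance in $H_{n,k-1}$; let $\mathbf r'=0^{k-1}$ be the root of $H_{n,k-1}$ and $P'$ its set of peripheral vertices. For $\mathbf x',\mathbf y'\in\mathbb{Z}_n^{k-1}$ and $\alpha,\beta\in\mathbb{Z}_n$ write $\alpha\mathbf x'$ for the vertex of $H_{n,k}$ obtained by prepending $\alpha$. Then: (a) for every $\alpha\in\mathbb{Z}_n$, $\partial_k(\alpha\mathbf x',\alpha\mathbf y')=\partial_{k-1}(\mathbf x',\mathbf y')$; (b) for every $\alpha\neq0$, $\partial_k(0\mathbf x',\alpha\mathbf y')=\partial_{k-1}(\mathbf x',\mathbf r')+1+\partial_{k-1}(\mathbf y',P')$; (c) for all $\alpha,\beta\neq0$ with $\alpha\ne\beta$, $$\partial_k(\alpha\mathbf x',\beta\mathbf y')=\min\{\partial_{k-1}(\mathbf x',P')+2+\partial_{k-1}(\mathbf y',P'),\ \partial_{k-1}(\mathbf x',\mathbf r')+1+\partial_{k-1}(\mathbf r',\mathbf y')\}.$$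
   Context: Let $n\ge 2$ and $k\ge 1$ be integers. $H_{n,k}$ is the simple undirected graph with vertex set $V_{n,k}=\mathbb{Z}_n^k$ (so $|V_{n,k}|=n^k$), whose vertices are written as strings $x_1x_2\ldots x_k$ with $x_j\in\mathbb{Z}_n=\{0,1,\ldots,n-1\}$. Two distinct vertices are adjacent if and only if they are related by one of the following rules. For $i=0$ the prefix $x_1\ldots x_i$ is empty, and ''$0\ldots0$'' denotes a string of zeros completing the word to length $k$. (R1) $x_1\ldots x_{k-1}x_k\sim x_1\ldots x_{k-1}y_k$ whenever $y_k\neq x_k$. (R2) For $0\le i\le k-2$: $x_1\ldots x_i0\ldots0\sim x_1\ldots x_ix_{i+1}\ldots x_k$ whenever $x_j\neq 0$ for all $i+1\le j\le k$. (R3) For $1\le i\le k-1$: $x_1\ldots x_{i-1}x_i0\ldots0\sim x_1\ldots x_{i-1}y_i0\ldots0$ whenever $x_i,y_i\neq0$ and $x_i\ne y_i$. In particular, $H_{n,1}$ is the complete graph $K_n$. The root of $H_{n,k}$ is $\mathbf r=00\ldots0$; a vertex of $H_{n,k}$ is peripheral if all its coordinates are nonzero, and $P$ denotes the set of peripheral vertices. For a vertex $\mathbf x$ and a vertex set $U$, $\partial(\mathbf x,U)=\min_{\mathbf u\in U}\partial(\mathbf x,\mathbf u)$. *)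

From mathcomp Require Import all_boot.
Set Implicit Arguments. Unset Strict Implicit. Unset Printing Implicit Defensive.

(* Vertices of H_{n,k}: k.-tuples over 'I_n (= Z_n as a set); position j : 'I_k
   is coordinate x_{j+1} of the paper. *)
Definition vtx (n k : nat) := (k.-tuple 'I_n).

Definition isz n (a : 'I_n) : bool := nat_of_ord a == 0.

Definition R1 n k (u v : vtx n k) : bool :=
  [forall j : 'I_k, (j.+1 < k) ==> (tnth u j == tnth v j)].

(* (R2) with paper index i (0 <= i <= k-2): common prefix of length i,
   u is zero on positions >= i, v is nonzero on positions >= i. *)
Definition R2 n k (u v : vtx n k) : bool :=
  [exists i : 'I_k, (i.+1 < k) &&
     [forall j : 'I_k, if j < i then tnth u j == tnth v j
                       else isz (tnth u j) && ~~ isz (tnth v j)]].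

(* (R3) with paper index i+1 (1 <= i+1 <= k-1): common prefix of length i,
   distinct nonzero entries at position i, zeros afterwards. *)
Definition R3 n k (u v : vtx n k) : bool :=
  [exists i : 'I_k, (i.+1 < k) &&
     [forall j : 'I_k, if j < i then tnth u j == tnth v j
                       else if j == i then
                         [&& ~~ isz (tnth u j), ~~ isz (tnth v j) & tnth u j != tnth v j]
                       else isz (tnth u j) && isz (tnth v j)]].

Definition Hadj n k : rel (vtx n k) := fun u v =>
  (u != v) && [|| R1 u v, R2 u v, R2 v u | R3 u v].

(* graph distance in a finite graph: least m such that there is a walk of
   length m from x to y (walks of length m are m.-tuples of successive
   vertices); #|T| if y is unreachable (does not occur for connected graphs). *)
Definition walkb (T : finType) (e : rel T) (x y : T) (m : nat) : bool :=
  [exists t : m.-tuple T, path e x t && (last x t == y)].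

Definition gdist (T : finType) (e : rel T) (x y : T) : nat :=
  find (walkb e x y) (iota 0 #|T|).

Definition gdist_set (T : finType) (e : rel T) (x : T) (U : {set T}) : nat :=
  \big[minn/#|T|]_(u in U) gdist e x u.

Definition distH {n k} := @gdist (vtx n k) (@Hadj n k).
Definition distHset {n k} := @gdist_set (vtx n k) (@Hadj n k).

Definition hroot n k (hn : 0 < n) : vtx n k := [tuple (Ordinal hn) | _ < k].

Definition periph n k : {set vtx n k} :=
  [set x : vtx n k | [forall j : 'I_k, ~~ isz (tnth x j)]].

Definition prep n k (a : 'I_n) (x : vtx n k) : vtx n k.+1 := [tuple of a :: x].

From mathcomp Require Import all_boot zify.
Set Implicit Arguments. Unset Strict Implicit. Unset Printing Implicit Defensive.

(* The formula of
   the theorem, extended to every target c z, changes by at most 1 along each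
   edge of H_{n,k} and vanishes at the source, so it bounds the distance from
   below; for the targets in (a)-(c) a walk of exactly that length is built
   from geodesics in the layers a x' and b y', joined through the edges
   0 0...0 ~ b p (b nonzero, p peripheral) and a 0...0 ~ b 0...0. *)

Section Walks.
Variables (T : finType) (e : rel T).
Implicit Types (x y z : T) (m : nat).

Lemma walkbP x y m :
  reflect (exists p : seq T, [/\ size p = m, path e x p & last x p = y])
          (walkb e x y m).
Proof.
apply: (iffP existsP) => [[t /andP[ept /eqP <-]] | [p [sp ep <-]]].
  by exists (val t); rewrite size_tuple.
have sp' : size p == m by rewrite sp.
by exists (Tuple sp'); rewrite /= ep eqxx.
Qed.

Lemma walkb0 x : walkb e x x 0.
Proof. by apply/walkbP; exists [::]. Qed.

Lemma walkb1 x y : e x y -> walkb e x y 1.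
Proof. by move=> exy; apply/walkbP; exists [:: y]; rewrite /= exy. Qed.

Lemma walkb_cat x y z m1 m2 :
  walkb e x y m1 -> walkb e y z m2 -> walkb e x z (m1 + m2).
Proof.
case/walkbP=> p1 [<- ep1 <-] /walkbP [p2 [<- ep2 <-]]; apply/walkbP.
by exists (p1 ++ p2); rewrite size_cat cat_path last_cat ep1 ep2.
Qed.

Lemma walkb_shorten x y m : walkb e x y m -> exists2 m', m' < #|T| & walkb e x y m'.
Proof.
case/walkbP=> p [_ ep <-]; case: (shortenP ep) => p' ep' uniq_p' _.
exists (size p'); last by apply/walkbP; exists p'.
by have := max_card (mem (x :: p')); rewrite (card_uniqP uniq_p').
Qed.

Lemma gdist_le x y m : walkb e x y m -> gdist e x y <= m.
Proof.
move=> w; rewrite /gdist; case: (ltnP m #|T|) => hm.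
  rewrite leqNgt; apply/negP => /(before_find 0).
  by rewrite nth_iota // add0n w.
by apply: leq_trans (find_size _ _) _; rewrite size_iota.
Qed.

Lemma has_walkb x y m : walkb e x y m -> has (walkb e x y) (iota 0 #|T|).
Proof.
by case/walkb_shorten=> m' lt_m' w; apply/hasP; exists m'; rewrite ?mem_iota.
Qed.

Lemma gdist_ltT x y m : walkb e x y m -> gdist e x y < #|T|.
Proof. by move/has_walkb; rewrite has_find size_iota. Qed.

Lemma walkb_gdist x y m : walkb e x y m -> walkb e x y (gdist e x y).
Proof.
move=> w; have reach := has_walkb w.
by move: (nth_find 0 reach); rewrite nth_iota ?add0n // (gdist_ltT w).
Qed.

Lemma path_last_lipschitz (f : T -> nat) :
    (forall u v, e u v -> f v <= (f u).+1) ->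
  forall p x, path e x p -> f (last x p) <= f x + size p.
Proof.
move=> f_lip; elim=> [|z p IHp] x /=; first by rewrite addn0.
by case/andP=> /f_lip exz /IHp; lia.
Qed.

Lemma gdist_lipschitz (f : T -> nat) x y :
    f x = 0 -> (forall u v, e u v -> f v <= (f u).+1) ->
  walkb e x y (f y) -> gdist e x y = f y.
Proof.
move=> fx0 f_lip w; apply/eqP; rewrite eqn_leq gdist_le //=.
have /walkbP [p [<- ep <-]] := walkb_gdist w.
by have := path_last_lipschitz f_lip ep; rewrite fx0.
Qed.

Hypothesis e_sym : symmetric e.

Lemma walkb_rev x y m : walkb e x y m -> walkb e y x m.
Proof.
case/walkbP=> p [<- ep <-]; apply/walkbP; exists (rev (belast x p)).
rewrite size_rev size_belast rev_path (@eq_path _ _ e) => [|u v]; last exact: e_sym.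
by split=> //; case: p {ep} => //= z p; rewrite rev_cons last_rcons.
Qed.

Hypothesis e_conn : forall x y, exists m, walkb e x y m.

Lemma gdistP x y : walkb e x y (gdist e x y).
Proof. by have [m w] := e_conn x y; exact: walkb_gdist w. Qed.

Lemma gdist_triangle x y z : gdist e x z <= gdist e x y + gdist e y z.
Proof. exact/gdist_le/walkb_cat/gdistP/gdistP. Qed.

Lemma gdist_sym x y : gdist e x y = gdist e y x.
Proof. by apply/eqP; rewrite eqn_leq !gdist_le // walkb_rev // gdistP. Qed.

Lemma gdist_refl x : gdist e x x = 0.
Proof. by apply/eqP; rewrite -leqn0 gdist_le // walkb0. Qed.

Lemma gdist_edge x y : e x y -> gdist e x y <= 1.
Proof. by move/walkb1/gdist_le. Qed.

End Walks.

Lemma bigmin_leq (I : eqType) (r : seq I) (P : pred I) (F : I -> nat) idx i :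
  i \in r -> P i -> \big[minn/idx]_(j <- r | P j) F j <= F i.
Proof.
elim: r => //= j r IHr; rewrite inE big_cons => /orP[/eqP <- -> | ri Pi].
  exact: geq_minl.
by case: (P j); [apply: leq_trans (geq_minr _ _) _|]; exact: IHr.
Qed.

Section GdistSet.
Variables (T : finType) (e : rel T) (U : {set T}).

Lemma gdist_set_le x u : u \in U -> gdist_set e x U <= gdist e x u.
Proof. by move=> Uu; apply: bigmin_leq; rewrite ?mem_index_enum. Qed.

Lemma gdist_set_attained x u0 m :
  u0 \in U -> walkb e x u0 m -> exists2 u, u \in U & gdist_set e x U = gdist e x u.
Proof.
move=> Uu0 w.
have : #|T| <= gdist_set e x U \/ exists2 u, u \in U & gdist_set e x U = gdist e x u.
  apply: (big_ind (fun v => #|T| <= v \/ exists2 u, u \in U & v = gdist e x u)).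
  - by left.
  - by move=> v1 v2 h1 h2; rewrite /minn; case: ifP.
  - by move=> u Uu; right; exists u.
case=> // big; have := gdist_set_le x Uu0; have := gdist_ltT w; lia.
Qed.

End GdistSet.

Section Prepend.
Variable n : nat.
Implicit Types (a b c : 'I_n).

Lemma tnth_prep0 k a (x : vtx n k) : tnth (prep a x) ord0 = a.
Proof. by rewrite (tnth_nth a). Qed.

Lemma tnth_prepS k a (x : vtx n k) (j : 'I_k) : tnth (prep a x) (lift ord0 j) = tnth x j.
Proof. by rewrite (tnth_nth a) lift0 /= (tnth_nth a). Qed.

Lemma prep_surj k (v : vtx n k.+1) : exists a x, v = prep a x.
Proof. by exists (thead v), (behead_tuple v); exact: tuple_eta. Qed.

Lemma prep_eq k a b (x y : vtx n k) : (prep a x == prep b y) = (a == b) && (x == y).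
Proof. by rewrite -val_eqE /= eqseq_cons. Qed.

Definition allz k (x : vtx n k) : bool := [forall j, isz (tnth x j)].

Lemma allzP k (hn : 0 < n) (x : vtx n k) : reflect (x = hroot k hn) (allz x).
Proof.
apply: (iffP forallP) => [zx | -> j]; last by rewrite tnth_mktuple.
by apply: eq_from_tnth => j; apply: val_inj; rewrite tnth_mktuple; exact/eqP/zx.
Qed.

Lemma allz_hroot k (hn : 0 < n) : allz (hroot k hn).
Proof. exact/allzP. Qed.

Lemma in_periph k (x : vtx n k) : (x \in periph n k) = [forall j, ~~ isz (tnth x j)].
Proof. by rewrite in_set. Qed.

Lemma isz_zero (hn : 0 < n) : isz (Ordinal hn).
Proof. by []. Qed.

Lemma isz_eq a b : isz a -> isz b -> a = b.
Proof. by move=> /eqP za /eqP zb; apply: val_inj; rewrite /= za zb. Qed.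

Lemma isz_neq a b : isz a -> ~~ isz b -> (b == a) = false.
Proof. by move=> za; apply: contraNF => /eqP ->. Qed.

Lemma hroot_prep k (hn : 0 < n) : hroot k.+1 hn = prep (Ordinal hn) (hroot k hn).
Proof.
apply: eq_from_tnth => j; case: (unliftP ord0 j) => [j'|] ->;
  by rewrite ?tnth_prep0 ?tnth_prepS !tnth_mktuple.
Qed.

Lemma periph_prep k a (x : vtx n k) :
  (prep a x \in periph n k.+1) = ~~ isz a && (x \in periph n k).
Proof.
rewrite !in_periph; apply/forallP/andP => [nzx | [nza /forallP nzx] j].
  split; first by have := nzx ord0; rewrite tnth_prep0.
  by apply/forallP => j; have := nzx (lift ord0 j); rewrite tnth_prepS.
by case: (unliftP ord0 j) => [j'|] ->; rewrite ?tnth_prep0 ?tnth_prepS.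
Qed.

Lemma const_periph k a : ~~ isz a -> [tuple a | _ < k] \in periph n k.
Proof. by move=> nza; rewrite in_periph; apply/forallP => j; rewrite tnth_mktuple. Qed.

Section PrependAdjacency.
Variables (k : nat) (hk : 0 < k).
Implicit Types (x y : vtx n k).

Lemma R1_prep a b x y : R1 (prep a x) (prep b y) = (a == b) && R1 x y.
Proof.
rewrite /R1; apply/forallP/andP => [R1xy | [/eqP <- /forallP R1xy] j].
  split; first by have := R1xy ord0; rewrite !tnth_prep0 /= ltnS hk.
  by apply/forallP => j; have := R1xy (lift ord0 j); rewrite !tnth_prepS lift0 ltnS.
case: (unliftP ord0 j) => [j'|] ->; first by rewrite !tnth_prepS lift0 ltnS; exact: R1xy.
by rewrite !tnth_prep0 eqxx implybT.
Qed.

Lemma R2_prep a b x y :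
  R2 (prep a x) (prep b y) =
  [&& isz a, ~~ isz b, allz x & y \in periph n k] || (a == b) && R2 x y.
Proof.
rewrite /R2; apply/idP/idP.
  case/existsP => i /andP[lt_i /forallP R2xy].
  case: (unliftP ord0 i) lt_i R2xy => [i'|] -> lt_i R2xy.
    apply/orP; right; have := R2xy ord0; rewrite !tnth_prep0 lift0 /= => ->.
    apply/existsP; exists i'; rewrite lift0 ltnS in lt_i; rewrite lt_i /=.
    by apply/forallP => j; have := R2xy (lift ord0 j); rewrite !tnth_prepS !lift0 ltnS.
  have := R2xy ord0; rewrite !tnth_prep0 /= => /andP[-> ->]; apply/orP; left.
  rewrite /= /allz in_periph; apply/andP; split; apply/forallP => j;
    by have := R2xy (lift ord0 j); rewrite !tnth_prepS lift0 /= => /andP[].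
case/orP => [/and4P[za nzb /forallP zx] | /andP[/eqP <- /existsP[i /andP[lt_i /forallP R2xy]]]].
  rewrite in_periph => /forallP nzy; apply/existsP; exists ord0; rewrite /= ltnS hk /=.
  apply/forallP => j; case: (unliftP ord0 j) => [j'|] -> /=.
    by rewrite !tnth_prepS zx nzy.
  by rewrite !tnth_prep0 za nzb.
apply/existsP; exists (lift ord0 i); rewrite lift0 ltnS lt_i /=; apply/forallP => j.
case: (unliftP ord0 j) => [j'|] ->; first by rewrite !tnth_prepS !lift0 ltnS; exact: R2xy.
by rewrite !tnth_prep0 /= eqxx.
Qed.

Lemma R3_prep a b x y :
  R3 (prep a x) (prep b y) =
  [&& ~~ isz a, ~~ isz b, a != b, allz x & allz y] || (a == b) && R3 x y.
Proof.
rewrite /R3; apply/idP/idP.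
  case/existsP => i /andP[lt_i /forallP R3xy].
  case: (unliftP ord0 i) lt_i R3xy => [i'|] -> lt_i R3xy.
    apply/orP; right; have := R3xy ord0; rewrite !tnth_prep0 lift0 /= => ->.
    apply/existsP; exists i'; rewrite lift0 ltnS in lt_i; rewrite lt_i /=.
    apply/forallP => j; have := R3xy (lift ord0 j); rewrite !tnth_prepS !lift0 ltnS.
    by rewrite (inj_eq (@lift_inj _ ord0)).
  have := R3xy ord0; rewrite !tnth_prep0 /= => /and3P[-> -> ->]; apply/orP; left.
  rewrite /allz /=; apply/andP; split; apply/forallP => j;
    by have := R3xy (lift ord0 j); rewrite !tnth_prepS lift0 /= => /andP[].
case/orP => [/and5P[nza nzb neq_ab /forallP zx /forallP zy]
            | /andP[/eqP <- /existsP[i /andP[lt_i /forallP R3xy]]]]; apply/existsP.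
  exists ord0; rewrite /= ltnS hk /=.
  apply/forallP => j; case: (unliftP ord0 j) => [j'|] -> /=.
    by rewrite !tnth_prepS zx zy.
  by rewrite !tnth_prep0 nza nzb neq_ab.
exists (lift ord0 i); rewrite lift0 ltnS lt_i /=; apply/forallP => j.
case: (unliftP ord0 j) => [j'|] ->.
  by rewrite !tnth_prepS !lift0 ltnS (inj_eq (@lift_inj _ ord0)); exact: R3xy.
by rewrite !tnth_prep0 /=.
Qed.

Lemma Hadj_prep a b x y :
  Hadj (prep a x) (prep b y) =
  [|| (a == b) && Hadj x y, [&& isz a, ~~ isz b, allz x & y \in periph n k],
      [&& isz b, ~~ isz a, allz y & x \in periph n k]
    | [&& ~~ isz a, ~~ isz b, a != b, allz x & allz y]].
Proof.
rewrite /Hadj R1_prep !R2_prep R3_prep prep_eq negb_and.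
by case: (eqVneq a b) => [<-|neq_ab] /=; [case: (isz a) | ]; rewrite /= ?orbF.
Qed.

End PrependAdjacency.

Lemma R1_sym k (u v : vtx n k) : R1 u v = R1 v u.
Proof. by apply: eq_forallb => j; rewrite eq_sym. Qed.

Lemma R3_sym k (u v : vtx n k) : R3 u v = R3 v u.
Proof.
apply: eq_existsb => i; congr (_ && _); apply: eq_forallb => j.
rewrite eq_sym; case: ifP => // _; case: ifP => _; last by rewrite andbC.
by rewrite eq_sym; case: (isz _); case: (isz _).
Qed.

Lemma Hadj_sym k : symmetric (@Hadj n k).
Proof.
move=> u v; rewrite /Hadj eq_sym R1_sym R3_sym; congr (_ && _).
by case: (R2 u v); case: (R2 v u); rewrite /= ?orbT.
Qed.

Lemma Hadj_prepl k a (x y : vtx n k) : Hadj x y -> Hadj (prep a x) (prep a y).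
Proof.
case: k x y => [|k] x y; first by rewrite (tuple0 x) (tuple0 y) /Hadj eqxx.
by move=> xy; rewrite Hadj_prep // eqxx xy.
Qed.

Lemma Hadj_prep_tuple0 a b (x y : vtx n 0) : a != b -> Hadj (prep a x) (prep b y).
Proof.
move=> neq_ab; rewrite /Hadj prep_eq negb_and neq_ab /=; apply/orP; left.
by apply/forallP => -[[|j] lt_j].
Qed.

Lemma Hadj_hroot_periph k (hk : 0 < k) (hn : 0 < n) (p : vtx n k) :
  p \in periph n k -> Hadj (hroot k hn) p.
Proof.
case: k hk p => // k _ p; have [b [{}p ->]] := prep_surj p.
rewrite periph_prep hroot_prep => /andP[nzb Pp].
case: k p Pp => [|k] p Pp.
  by apply: Hadj_prep_tuple0; apply: contraNneq nzb => <-.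
by rewrite Hadj_prep //= nzb allz_hroot Pp orbT.
Qed.

Lemma walkb_prep k a (x y : vtx n k) m :
  walkb (@Hadj n k) x y m -> walkb (@Hadj n k.+1) (prep a x) (prep a y) m.
Proof.
case/walkbP => p [<- ep <-]; apply/walkbP; exists (map (prep a) p).
rewrite size_map last_map; split=> //.
by elim: p x ep => //= z p IHp x /andP[/(Hadj_prepl a) -> /IHp].
Qed.

Lemma walkb_hroot k (hn : 0 < n) (x : vtx n k) : exists m, walkb (@Hadj n k) x (hroot k hn) m.
Proof.
elim: k x => [|k IHk] x.
  by exists 0; rewrite (tuple0 x) (tuple0 (hroot 0 hn)); exact: walkb0.
have [a [{}x ->]] := prep_surj x; have [m w] := IHk x; rewrite hroot_prep.
have {}w := walkb_prep a w.
have [za|nza] := boolP (isz a); first by exists m; rewrite -(isz_eq za (isz_zero hn)).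
suff [m' w'] : exists m', walkb (@Hadj n k.+1) (prep a (hroot k hn)) (prep (Ordinal hn) (hroot k hn)) m'.
  by exists (m + m'); exact: walkb_cat w w'.
case: k {IHk x w} => [|k].
  by exists 1; apply/walkb1/Hadj_prep_tuple0; apply: contraNneq nza => ->.
have Pa := const_periph k.+1 nza.
exists (1 + 1); apply: walkb_cat (walkb1 (Hadj_prepl a (Hadj_hroot_periph (ltn0Sn k) hn Pa))) (walkb1 _).
by rewrite Hadj_prep //= nza allz_hroot Pa !orbT.
Qed.

Lemma Hconn k (hn : 0 < n) (x y : vtx n k) : exists m, walkb (@Hadj n k) x y m.
Proof.
have [m1 w1] := walkb_hroot hn x; have [m2 w2] := walkb_hroot hn y.
by exists (m1 + m2); apply: walkb_cat w1 (walkb_rev (@Hadj_sym k) w2).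
Qed.

End Prepend.

Section LayerDistances.
Variables (n k : nat) (hn : 1 < n) (hk : 0 < k).
Implicit Types (a b c : 'I_n) (x y z p : vtx n k).

Local Notation o := (Ordinal (ltnW hn)).
Local Notation r := (hroot k (ltnW hn)).
Local Notation P := (periph n k).
Local Notation d := (@distH n k).
Local Notation dP z := (@distHset n k z P).

Lemma d_sym x y : d x y = d y x.
Proof. exact: (gdist_sym (@Hadj_sym n k) (@Hconn n k (ltnW hn))). Qed.

Lemma d_triangle x y z : d x z <= d x y + d y z.
Proof. exact: (gdist_triangle (@Hconn n k (ltnW hn))). Qed.

Lemma d_refl x : d x x = 0.
Proof. exact: gdist_refl. Qed.

Lemma d_edge x y : Hadj x y -> d x y <= 1.
Proof. exact: gdist_edge. Qed.

Lemma d_walkb x y : walkb (@Hadj n k) x y (d x y).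
Proof. exact: (gdistP (@Hconn n k (ltnW hn))). Qed.

Lemma d_root_periph p : p \in P -> d r p <= 1.
Proof. by move/(Hadj_hroot_periph hk (ltnW hn))/d_edge. Qed.

Lemma dP_le z p : p \in P -> dP z <= d z p.
Proof. exact: gdist_set_le. Qed.

Lemma dP_attained z : exists2 p, p \in P & dP z = d z p.
Proof.
have Pp := const_periph k (isT : ~~ isz (Ordinal hn)).
by have [m w] := Hconn (ltnW hn) z [tuple (Ordinal hn) | _ < k]; exact: (gdist_set_attained Pp w).
Qed.

Lemma dP_edge z z' : Hadj z z' -> dP z' <= dP z + 1.
Proof.
move=> zz'; have [p Pp ->] := dP_attained z.
have := dP_le z' Pp; have := d_triangle z' z p; have := d_edge zz'; rewrite d_sym; lia.
Qed.

Lemma dP_le_root z : dP z <= d z r + 1.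
Proof.
have [p Pp _] := dP_attained z.
have := dP_le z Pp; have := d_triangle z r p; have := d_root_periph Pp; lia.
Qed.

Lemma d_root_le_dP z : d z r <= dP z + 1.
Proof.
have [p Pp ->] := dP_attained z.
have := d_triangle z p r; have := d_root_periph Pp; rewrite (d_sym r); lia.
Qed.

Lemma d_periph_le_dP z p : p \in P -> d z p <= dP z + 2.
Proof.
move=> Pp; have [q Pq ->] := dP_attained z.
have := d_triangle z q p; have := d_triangle q r p.
have := d_root_periph Pp; have := d_root_periph Pq; rewrite (d_sym r q); lia.
Qed.

(* The claimed distance from a x to c z in H_{n,k+1}; the branch for c = 0
   is part (b) read backwards. *)
Definition dlayer a x c z : nat :=
  if c == a then d x z
  else if isz a then d x r + 1 + dP z
  else if isz c then dP x + 1 + d r z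
  else minn (dP x + 2 + dP z) (d x r + 1 + d r z).

Lemma dlayer_edge a x c z z' : Hadj z z' -> dlayer a x c z' <= (dlayer a x c z).+1.
Proof.
move=> zz'; have := d_edge zz'; have := d_triangle x z z'; have := d_triangle r z z'.
have := dP_edge zz'; rewrite /dlayer.
by case: ifP => _; [lia|]; case: ifP => _; [lia|]; case: ifP => _; lia.
Qed.

Lemma dlayer_root_periph a x c c' p : isz c -> ~~ isz c' -> p \in P ->
  dlayer a x c' p <= (dlayer a x c r).+1 /\ dlayer a x c r <= (dlayer a x c' p).+1.
Proof.
move=> zc nzc' Pp; have := dP_le p Pp; have := d_periph_le_dP x Pp.
have := dP_le x Pp; have := d_triangle x r p; have := d_root_periph Pp.
have := dP_le_root x; have := d_root_le_dP x.
rewrite /dlayer !d_refl zc (negbTE nzc').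
have [za|nza] := boolP (isz a).
  by rewrite -(isz_eq zc za) eqxx (isz_neq zc nzc'); lia.
have -> : (c == a) = false by apply: contraNF nza => /eqP <-.
by case: ifP => _; lia.
Qed.

Lemma dlayer_root_root a x c c' : ~~ isz c -> ~~ isz c' ->
  dlayer a x c' r <= (dlayer a x c r).+1.
Proof.
move=> nzc nzc'; have := dP_le_root x; have := d_root_le_dP x.
have := dP_le_root r; rewrite /dlayer d_refl (negbTE nzc) (negbTE nzc').
have [za|nza] := boolP (isz a); first by rewrite !(isz_neq za) // za; lia.
by case: (c' == a); case: (c == a); rewrite ?(negbTE nza); lia.
Qed.

Definition dpot a x (v : vtx n k.+1) : nat := dlayer a x (thead v) (behead_tuple v).

Lemma dpot_prep a x c z : dpot a x (prep c z) = dlayer a x c z.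
Proof. by rewrite /dpot; congr dlayer; apply: val_inj. Qed.

Lemma dpot_edge a x v w : Hadj v w -> dpot a x w <= (dpot a x v).+1.
Proof.
have [c [z ->]] := prep_surj v; have [c' [z' ->]] := prep_surj w.
rewrite !dpot_prep Hadj_prep //; case/or4P.
- by case/andP => /eqP <-; exact: dlayer_edge.
- case/and4P => zc nzc' /(allzP (ltnW hn)) -> Pz'.
  by case: (dlayer_root_periph a x zc nzc' Pz').
- case/and4P => zc' nzc /(allzP (ltnW hn)) -> Pz.
  by case: (dlayer_root_periph a x zc' nzc Pz).
- case/and5P => nzc nzc' _ /(allzP (ltnW hn)) -> /(allzP (ltnW hn)) ->.
  exact: dlayer_root_root.
Qed.

Lemma distH_prep_dlayer a x c z :
  walkb (@Hadj n k.+1) (prep a x) (prep c z) (dlayer a x c z) ->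
  distH (prep a x) (prep c z) = dlayer a x c z.
Proof.
rewrite -dpot_prep; apply: gdist_lipschitz; last exact: dpot_edge.
by rewrite dpot_prep /dlayer eqxx d_refl.
Qed.

Lemma distH_prep_same a x y : distH (prep a x) (prep a y) = d x y.
Proof.
have E : dlayer a x a y = d x y by rewrite /dlayer eqxx.
by rewrite -E distH_prep_dlayer // E; exact: walkb_prep (d_walkb x y).
Qed.

Lemma distH_prep_zero a x y : ~~ isz a ->
  distH (prep o x) (prep a y) = d x r + 1 + dP y.
Proof.
move=> nza; have E : dlayer o x a y = d x r + 1 + dP y.
  by rewrite /dlayer (isz_neq (isz_zero _) nza) isz_zero.
rewrite -E distH_prep_dlayer // E; have [p Pp ->] := dP_attained y.
have or_ap : Hadj (prep o r) (prep a p) by rewrite Hadj_prep //= nza allz_hroot Pp orbT.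
rewrite (d_sym y); apply: walkb_cat (walkb_prep _ (d_walkb p y)).
exact: walkb_cat (walkb_prep _ (d_walkb x r)) (walkb1 or_ap).
Qed.

Lemma distH_prep_nonzero a b x y : ~~ isz a -> ~~ isz b -> a != b ->
  distH (prep a x) (prep b y) = minn (dP x + 2 + dP y) (d x r + 1 + d r y).
Proof.
move=> nza nzb neq_ab; have E : dlayer a x b y = minn (dP x + 2 + dP y) (d x r + 1 + d r y).
  by rewrite /dlayer eq_sym (negbTE neq_ab) (negbTE nza) (negbTE nzb).
rewrite -E distH_prep_dlayer // E.
case: leqP => _.
  have [p Pp ->] := dP_attained x; have [q Pq ->] := dP_attained y.
  have ap_or : Hadj (prep a p) (prep o r) by rewrite Hadj_prep //= nza allz_hroot Pp !orbT.
  have or_bq : Hadj (prep o r) (prep b q) by rewrite Hadj_prep //= nzb allz_hroot Pq orbT.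
  rewrite -[2]/(1 + 1) addnA (d_sym y); apply: walkb_cat (walkb_prep _ (d_walkb q y)).
  apply: walkb_cat (walkb1 or_bq).
  exact: walkb_cat (walkb_prep _ (d_walkb x p)) (walkb1 ap_or).
have ar_br : Hadj (prep a r) (prep b r) by rewrite Hadj_prep //= nza nzb neq_ab allz_hroot !orbT.
apply: walkb_cat (walkb_prep _ (d_walkb r y)).
exact: walkb_cat (walkb_prep _ (d_walkb x r)) (walkb1 ar_br).
Qed.

End LayerDistances.

Theorem mainTheorem5 (n k' : nat) (hn : 1 < n) (hk : 1 <= k') :
  (forall (a : 'I_n) (x y : vtx n k'),
      distH (prep a x) (prep a y) = distH x y) /\
  (forall (a : 'I_n) (x y : vtx n k'), ~~ isz a ->
      distH (prep (Ordinal (ltnW hn)) x) (prep a y)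
      = distH x (hroot k' (ltnW hn)) + 1 + distHset y (periph n k')) /\
  (forall (a b : 'I_n) (x y : vtx n k'), ~~ isz a -> ~~ isz b -> a != b ->
      distH (prep a x) (prep b y)
      = minn (distHset x (periph n k') + 2 + distHset y (periph n k'))
             (distH x (hroot k' (ltnW hn)) + 1 + distH (hroot k' (ltnW hn)) y)).
Proof.
split; first exact: distH_prep_same.
by split; [exact: distH_prep_zero | exact: distH_prep_nonzero].
Qed.
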